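(* Let $\alpha,\beta,\gamma\in\mathbb{Z}[i]$ satisfy $\alpha^2+i\beta^2+(1+i)\gamma^2=0$, $\alpha\beta\gamma\neq0$ and $\gcd(\alpha,\beta,\gamma)\in U$. Then $\alpha\beta\gamma\not\equiv0\pmod{1+i}$.
   Context: $\mathbb{Z}[i]$ is the ring of Gaussian integers, $U=\{1,-1,i,-i\}$ its unit group; $\gcd(\alpha,\beta,\gamma)\in U$ means no common non-unit divisor. *)

(* Gaussian integers Z[i] realized as the subring
   {z in algC | Re z, Im z integers} of the algebraic complex numbers algC. *)
From mathcomp Require Import all_boot all_order all_algebra all_field.
Set Implicit Arguments. Unset Strict Implicit. Unset Printing Implicit Defensive.
Import Order.TTheory GRing.Theory Num.Theory.
Local Open Scope ring_scope.

Definition gaussInt (z : algC) : bool :=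
  ('Re z \is a Num.int) && ('Im z \is a Num.int).

Definition gdvd (d x : algC) : Prop :=
  exists2 q : algC, gaussInt q & x = d * q.

(* a Gaussian integer u is a unit of Z[i] (i.e. u ∈ U = {1,-1,i,-i}) iff u | 1 *)
Definition gunit (u : algC) : Prop := gaussInt u /\ gdvd u 1.

(* gcd(a,b,c) ∈ U: every common Gaussian-integer divisor is a unit *)
Definition gcoprime3 (a b c : algC) : Prop :=
  forall d : algC, gaussInt d -> gdvd d a -> gdvd d b -> gdvd d c -> gunit d.

(** Reduce modulo 2 = -i (1 + i)^2.  A Gaussian integer is congruent to 0 or 1
    modulo the prime 1 + i, and accordingly its square is congruent to 0 or 1
    modulo 2.  Reading the equation modulo 2 forces the three residues
    modulo 1 + i to coincide, so if 1 + i divides one of a, b, c it divides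
    all three, contradicting gcd(a, b, c) = 1. *)
From mathcomp Require Import all_boot all_order all_algebra all_field.
From mathcomp Require Import ring zify.
Set Implicit Arguments. Unset Strict Implicit. Unset Printing Implicit Defensive.
Import Order.TTheory GRing.Theory Num.Theory.
Local Open Scope ring_scope.

Local Notation pi := (1 + 'i : algC).

Definition grect (x y : int) : algC := x%:~R + 'i * y%:~R.

Lemma mulC_rect (x y u v : algC) :
  (x + 'i * y) * (u + 'i * v) = (x * u - y * v) + 'i * (x * v + y * u).
Proof.
apply/eqP; rewrite -subr_eq0.
have -> : (x + 'i * y) * (u + 'i * v) - ((x * u - y * v) + 'i * (x * v + y * u))
          = ('i ^+ 2 + 1) * (y * v) by ring.
by rewrite sqrCi addNr mul0r.
Qed.

Lemma Re_grect x y : 'Re (grect x y) = x%:~R.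
Proof. by rewrite Re_rect ?Rreal_int ?intr_int. Qed.

Lemma Im_grect x y : 'Im (grect x y) = y%:~R.
Proof. by rewrite Im_rect ?Rreal_int ?intr_int. Qed.

Lemma grectD x y u v : grect x y + grect u v = grect (x + u) (y + v).
Proof. rewrite /grect !intrD; ring. Qed.

Lemma grectN x y : - grect x y = grect (- x) (- y).
Proof. rewrite /grect !intrN; ring. Qed.

Lemma grectM x y u v : grect x y * grect u v = grect (x * u - y * v) (x * v + y * u).
Proof. by rewrite /grect mulC_rect !(intrD, intrN, intrM). Qed.

Lemma gaussInt_grect x y : gaussInt (grect x y).
Proof. by rewrite /gaussInt Re_grect Im_grect !intr_int. Qed.

Lemma gaussIntP z : gaussInt z -> exists x y, z = grect x y.
Proof.
case/andP => /intrP [x Rez] /intrP [y Imz]; exists x, y.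
by rewrite /grect -Rez -Imz -algCrect.
Qed.

Lemma gaussInt1 : gaussInt 1.
Proof. by have := gaussInt_grect 1 0; rewrite /grect mulr0 addr0. Qed.

Lemma gaussInti : gaussInt 'i.
Proof. by have := gaussInt_grect 0 1; rewrite /grect mulr1 add0r. Qed.

Lemma gaussIntD z w : gaussInt z -> gaussInt w -> gaussInt (z + w).
Proof.
move=> /gaussIntP [x [y ->]] /gaussIntP [u [v ->]].
by rewrite grectD gaussInt_grect.
Qed.

Lemma gaussIntN z : gaussInt z -> gaussInt (- z).
Proof. by move=> /gaussIntP [x [y ->]]; rewrite grectN gaussInt_grect. Qed.

Lemma gaussIntM z w : gaussInt z -> gaussInt w -> gaussInt (z * w).
Proof.
move=> /gaussIntP [x [y ->]] /gaussIntP [u [v ->]].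
by rewrite grectM gaussInt_grect.
Qed.

Lemma gdvdD d x y : gdvd d x -> gdvd d y -> gdvd d (x + y).
Proof.
by move=> [q gq ->] [r gr ->]; exists (q + r); rewrite ?gaussIntD ?mulrDr.
Qed.

Lemma gdvdN d x : gdvd d x -> gdvd d (- x).
Proof. by move=> [q gq ->]; exists (- q); rewrite ?gaussIntN ?mulrN. Qed.

Lemma gdvdB d x y : gdvd d x -> gdvd d y -> gdvd d (x - y).
Proof. by move=> dx dy; apply: gdvdD dx (gdvdN dy). Qed.

Lemma gdvdMr d x y : gaussInt y -> gdvd d x -> gdvd d (x * y).
Proof. by move=> gy [q gq ->]; exists (q * y); rewrite ?gaussIntM ?mulrA. Qed.

Lemma gdvdMl d x y : gaussInt y -> gdvd d x -> gdvd d (y * x).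
Proof. by rewrite mulrC; apply: gdvdMr. Qed.

Lemma gdvd2_grect x y : gdvd 2 (grect x y) -> (2 %| x)%Z /\ (2 %| y)%Z.
Proof.
move=> [q /gaussIntP [u [v ->]]].
have -> : 2 = grect 2 0 by rewrite /grect mulr0 addr0.
rewrite grectM !mul0r subr0 addr0 => e.
have := congr1 (fun z => 'Re z) e; rewrite /= !Re_grect => /intr_inj ->.
have := congr1 (fun z => 'Im z) e; rewrite /= !Im_grect => /intr_inj ->.
by rewrite !dvdz_mulr.
Qed.

Lemma gdvd_pi_grect x y : (2 %| x + y)%Z -> gdvd pi (grect x y).
Proof.
case/dvdzP => k xy; exists (grect k (k - x)); first exact: gaussInt_grect.
have -> : pi = grect 1 1 by rewrite /grect mulr1.
by rewrite grectM; congr grect; lia.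
Qed.

Lemma mul_pi_conj : pi * (1 - 'i) = 2.
Proof.
apply/eqP; rewrite -subr_eq0.
have -> : pi * (1 - 'i) - 2 = - ('i ^+ 2 + 1) by ring.
by rewrite sqrCi addNr oppr0.
Qed.

Lemma sqr_pi : pi ^+ 2 = 2 * 'i.
Proof.
apply/eqP; rewrite -subr_eq0.
have -> : pi ^+ 2 - 2 * 'i = 'i ^+ 2 + 1 by ring.
by rewrite sqrCi addNr.
Qed.

Lemma gaussInt_pi : gaussInt pi.
Proof. by rewrite gaussIntD ?gaussInt1 ?gaussInti. Qed.

Lemma not_gdvd_pi1 : ~ gdvd pi 1.
Proof.
move=> [q gq pq1].
have : gdvd 2 (grect 1 (-1)).
  exists q => //; rewrite -mul_pi_conj mulrAC -pq1 mul1r /grect.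
  by rewrite intrN mulrN mulr1.
by case/gdvd2_grect.
Qed.

Lemma gdvd_pi_or_subr1 z : gaussInt z -> gdvd pi z \/ gdvd pi (z - 1).
Proof.
move=> /gaussIntP [x [y ->]].
have [even_xy | odd_xy] := boolP (2 %| x + y)%Z.
  by left; apply: gdvd_pi_grect.
right; have -> : grect x y - 1 = grect (x - 1) y by rewrite /grect intrB; ring.
by apply: gdvd_pi_grect; lia.
Qed.

Lemma gdvd_pi_mul z w :
  gaussInt z -> gaussInt w -> gdvd pi (z * w) -> gdvd pi z \/ gdvd pi w.
Proof.
move=> gz gw pzw.
have [pz | pz1] := gdvd_pi_or_subr1 gz; first by left.
have [pw | pw1] := gdvd_pi_or_subr1 gw; first by right.
exfalso; apply: not_gdvd_pi1.
have one_eq : z * w - ((z - 1) * w + (w - 1)) = 1 by ring.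
rewrite -[X in gdvd _ X]one_eq.
by apply: gdvdB pzw (gdvdD (gdvdMr gw pz1) pw1).
Qed.

Lemma sqr_mod2 z :
  gaussInt z -> exists e : bool, gdvd 2 (z ^+ 2 - e%:R) /\ (gdvd pi z <-> ~~ e).
Proof.
move=> gz; have [pz | pz1] := gdvd_pi_or_subr1 gz.
  exists false; split; last by split.
  case: pz => q gq ->.
  exists ('i * q ^+ 2); first by rewrite gaussIntM ?gaussInti ?gaussIntM.
  by rewrite subr0 exprMn sqr_pi -mulrA.
exists true; split; last first.
  split=> // pz; case: not_gdvd_pi1.
  by rewrite -[X in gdvd _ X](subKr z); apply: gdvdB pz pz1.
case: pz1 => q gq z1; exists ('i * q ^+ 2 + pi * q).
  by rewrite gaussIntD ?gaussIntM ?gaussInti ?gaussInt_pi.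
have -> : z = pi * q + 1 by rewrite -z1 subrK.
by rewrite sqrrD expr1n mulr1 addrK exprMn sqr_pi; ring.
Qed.

Lemma gdvd2_grect_bits (ea eb ec : bool) :
  gdvd 2 (grect (ea + ec)%N (eb + ec)%N) -> ea = ec /\ eb = ec.
Proof. by case/gdvd2_grect; case: ea; case: eb; case: ec. Qed.

Theorem lemma4p16 (a b c : algC) :
  gaussInt a -> gaussInt b -> gaussInt c ->
  a ^+ 2 + 'i * b ^+ 2 + (1 + 'i) * c ^+ 2 = 0 ->
  a * b * c != 0 ->
  gcoprime3 a b c ->
  ~ gdvd (1 + 'i) (a * b * c).
Proof.
move=> ga gb gc abc0 _ coprime_abc pabc.
have [ea [a2 pa]] := sqr_mod2 ga.
have [eb [b2 pb]] := sqr_mod2 gb.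
have [ec [c2 pc]] := sqr_mod2 gc.
have two_e : gdvd 2 (grect (ea + ec)%N (eb + ec)%N).
  rewrite -[grect _ _]opprK -[X in - X]sub0r -abc0; apply: gdvdN.
  have -> : a ^+ 2 + 'i * b ^+ 2 + pi * c ^+ 2 - grect (ea + ec)%N (eb + ec)%N
      = (a ^+ 2 - ea%:R) + 'i * (b ^+ 2 - eb%:R) + pi * (c ^+ 2 - ec%:R).
    by rewrite /grect -!pmulrn !natrD; ring.
  by apply: gdvdD (gdvdD a2 (gdvdMl gaussInti b2)) (gdvdMl gaussInt_pi c2).
have [ea_ec eb_ec] := gdvd2_grect_bits two_e.
rewrite {}ea_ec in pa; rewrite {}eb_ec in pb.
have nec : ~~ ec.
  have [/(gdvd_pi_mul ga gb) [] | ] := gdvd_pi_mul (gaussIntM ga gb) gc pabc.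
  - by move/pa.
  - by move/pb.
  - by move/pc.
have [_ pi_unit] := coprime_abc pi gaussInt_pi (pa.2 nec) (pb.2 nec) (pc.2 nec).
exact: not_gdvd_pi1 pi_unit.
Qed.
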